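(* Let $I\subseteq\overline{\mathbb R}[x_1^{\pm1},\dots,x_n^{\pm1}]$ be a tropical ideal and $a\in\mathbb R$, and let $\pi:\mathbb R^n\to\mathbb R^{n-1}$ be the projection onto the first $n-1$ coordinates. Then $V(I|_{x_n=a})\subseteq\pi(V(I)\cap\{x_n=a\})$. Moreover, if $\mathbf w\in\mathbb R^n$ with $w_n=a$ lies in a closed cell $\sigma$ of a polyhedral complex $\Sigma$ with $|\Sigma|=V(I)$ such that $\operatorname{span}(\sigma)\not\subseteq\{x_n=0\}$, then $\pi(\mathbf w)\in V(I|_{x_n=a})$. In particular, if $V(I)$ and $\{x_n=a\}$ intersect transversely at $\mathbf w$, then $\pi(\mathbf w)\in V(I|_{x_n=a})$.
   Context: $\overline{\mathbb R}=(\mathbb R\cup\{\infty\},\min,+)$. $[f]_{\mathbf x^{\mathbf u}}$ is the coefficient of $\mathbf x^{\mathbf u}$, $f(\mathbf w)=\min_{\mathbf u}([f]_{\mathbf x^{\mathbf u}}+\mathbf u\cdot\mathbf w)$. Tropical ideal: for $f,g\in I$ and $\mathbf x^{\mathbf u}$ with $[f]_{\mathbf x^{\mathbf u}}=[g]_{\mathbf x^{\mathbf u}}\ne\infty$ there is $h\in I$ with $[h]_{\mathbf x^{\mathbf u}}=\infty$ and $[h]_{\mathbf x^{\mathbf v}}\ge\min([f]_{\mathbf x^{\mathbf v}},[g]_{\mathbf x^{\mathbf v}})$ for all $\mathbf v$, with equality when $[f]_{\mathbf x^{\mathbf v}}\ne[g]_{\mathbf x^{\mathbf v}}$. $I|_{x_n=a}=\{f|_{x_n=a}:f\in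 I\}\subseteq\overline{\mathbb R}[x_1^{\pm1},\dots,x_{n-1}^{\pm1}]$. $V(K)$ is the set of points at which the minimum of every $f\in K$, $f\ne\infty$, is attained at least twice. $\operatorname{span}(\sigma)=\operatorname{span}\{\mathbf x-\mathbf y:\mathbf x,\mathbf y\in\sigma\}$. Two polyhedral complexes intersect transversely at $\mathbf w$ if $\mathbf w$ lies in the relative interiors of cells $\sigma_1,\sigma_2$ of each with $\operatorname{span}(\sigma_1)+\operatorname{span}(\sigma_2)=\mathbb R^n$. *)

From HB Require Import structures.
From mathcomp Require Import all_boot all_order all_algebra.
From mathcomp Require Import reals.
From Stdlib Require List.
Set Implicit Arguments. Unset Strict Implicit. Unset Printing Implicit Defensive.
Import Order.TTheory GRing.Theory Num.Theory.
Local Open Scope ring_scope.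

Section Tropical.
Variable R : realType.

(* Tropical numbers R ∪ {∞}: [None] is ∞. *)
Definition trop := option R.

Definition tle (x y : trop) : Prop :=
  match y with
  | None => True
  | Some b => match x with Some a' => a' <= b | None => False end
  end.

Definition tmin (x y : trop) : trop :=
  match x, y with
  | None, _ => y
  | _, None => x
  | Some a', Some b => Some (Num.min a' b)
  end.

Definition is_tmin (A : R -> Prop) (m : trop) : Prop :=
  match m with
  | None => forall x, ~ A x
  | Some c => A c /\ forall x, A x -> c <= x
  end.

Definition expo (k : nat) := {ffun 'I_k -> int}.
Definition pt (k : nat) := 'I_k -> R.

Definition dotu k (u : expo k) (w : pt k) : R := \sum_(i < k) (u i)%:~R * w i.
Definition dotr k (c w : pt k) : R := \sum_(i < k) c i * w i.

(* Tropical Laurent polynomial in k variables: coefficient function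
   u |-> [f]_{x^u}; genuine polynomials have finite support. *)
Definition tpoly (k : nat) := expo k -> trop.

Definition finsupp k (f : tpoly k) : Prop :=
  exists s : seq (expo k), forall u, u \notin s -> f u = None.

Definition is_tprod k (h f p : tpoly k) : Prop :=
  forall w : expo k, is_tmin (fun x => exists (u v : expo k) c d,
                       (forall i, u i + v i = w i) /\ h u = Some c /\ f v = Some d
                       /\ x = c + d) (p w).

(* Tropical ideal: an ideal of the semiring of tropical Laurent polynomials
   satisfying the elimination axiom. *)
Definition tropical_ideal k (I : tpoly k -> Prop) : Prop :=
  (forall f, I f -> finsupp f) /\
  I (fun _ => None) /\
  (forall f g, I f -> I g -> I (fun u => tmin (f u) (g u))) /\
  (forall h f p, finsupp h -> I f -> is_tprod h f p -> I p) /\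
  (forall f g (u : expo k), I f -> I g -> f u = g u -> f u <> None ->
     exists h, I h /\ h u = None /\
       forall v, tle (tmin (f v) (g v)) (h v) /\
                 (f v <> g v -> h v = tmin (f v) (g v))).

Definition Vtrop k (K : tpoly k -> Prop) (w : pt k) : Prop :=
  forall f, K f -> (exists u, f u <> None) ->
    exists (u v : expo k) c d, u != v /\ f u = Some c /\ f v = Some d /\
      c + dotu u w = d + dotu v w /\
      forall (z : expo k) e, f z = Some e -> c + dotu u w <= e + dotu z w.

(* The substitution x_n = a (here the last variable, index ord_max of 'I_n.+1). *)
Definition restr_poly n (a : R) (f : tpoly n.+1) (g : tpoly n) : Prop :=
  forall u' : expo n,
    is_tmin (fun x => exists (u : expo n.+1) c, f u = Some c /\
               (forall i : 'I_n, u (widen_ord (leqnSn n) i) = u' i) /\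
               x = c + (u ord_max)%:~R * a) (g u').

Definition restr_ideal n (I : tpoly n.+1 -> Prop) (a : R) (g : tpoly n) : Prop :=
  exists f, I f /\ restr_poly a f g.

Definition proj n (w : pt n.+1) : pt n := fun i => w (widen_ord (leqnSn n) i).

Definition polyhedron k (P : pt k -> Prop) : Prop :=
  exists (m : nat) (A : 'I_m -> pt k) (b : 'I_m -> R),
    forall x, P x <-> forall j, dotr (A j) x <= b j.

Definition face k (F P : pt k -> Prop) : Prop :=
  (exists x, F x) /\
  exists c : pt k, forall x, F x <-> (P x /\ forall y, P y -> dotr c x <= dotr c y).

Definition polyhedral_complex k (S : seq (pt k -> Prop)) : Prop :=
  (forall s, List.In s S -> polyhedron s) /\
  (forall s F, List.In s S -> face F s ->
     exists t, List.In t S /\ forall x, t x <-> F x) /\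
  (forall s t, List.In s S -> List.In t S ->
     (forall x, ~ (s x /\ t x)) \/
     (face (fun x => s x /\ t x) s /\ face (fun x => s x /\ t x) t)).

Definition cx_support k (S : seq (pt k -> Prop)) (x : pt k) : Prop :=
  exists s, List.In s S /\ s x.

Definition dspan k (s : pt k -> Prop) (v : pt k) : Prop :=
  exists l : seq (R * pt k * pt k),
    (forall t, List.In t l -> s t.1.2 /\ s t.2) /\
    forall i, v i = \sum_(t <- l) t.1.1 * (t.1.2 i - t.2 i).

Definition relint k (s : pt k -> Prop) (x : pt k) : Prop :=
  s x /\ exists e : R, 0 < e /\
    forall v, dspan s v -> (forall i, `|v i| < e) -> s (fun i => x i + v i).

Definition transverse k (X Y : pt k -> Prop) (w : pt k) : Prop :=
  exists (S1 S2 : seq (pt k -> Prop)) s1 s2,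
    polyhedral_complex S1 /\ (forall x, cx_support S1 x <-> X x) /\
    polyhedral_complex S2 /\ (forall x, cx_support S2 x <-> Y x) /\
    List.In s1 S1 /\ List.In s2 S2 /\ relint s1 w /\ relint s2 w /\
    forall v, exists v1 v2, dspan s1 v1 /\ dspan s2 v2 /\
                            forall i, v i = v1 i + v2 i.

End Tropical.

(* Write w = (w', a).  A term c x^u of f becomes the term (c + u_n a) x^u' of
   f|_{x_n=a}, where u' drops the last exponent, and the terms of f with the
   same u' merge into their minimum.  Hence f at w and f|_{x_n=a} at w' have
   the same minimum, and two distinct minimal terms of the restriction lift to
   two distinct minimal terms of f: this gives the inclusion.

   Conversely, if the cell of V(I) through w contains a point x with x_n <> a,
   then f tropically vanishes along the segment from w to x.  For small t > 0
   the terms minimal at w + t (x - w) are among those minimal at w, so some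
   two distinct terms p, q minimal at w satisfy p.(x - w) = q.(x - w).  Were their
   first n - 1 exponents equal, this would force p_n = q_n; hence they stay
   distinct after restriction.  Transversality yields such a cell, because
   the cells of the hyperplane x_n = a only span horizontal directions. *)
From HB Require Import structures.
From mathcomp Require Import all_boot all_order all_algebra.
From mathcomp Require Import reals.
From mathcomp Require Import ring lra.
From Stdlib Require List.
From Stdlib Require Import Classical FunctionalExtensionality.
Import Order.TTheory GRing.Theory Num.Theory.
Local Open Scope ring_scope.
Set Implicit Arguments. Unset Strict Implicit.

Section TropicalRestriction.
Variable R : realType.

Definition attains k (f : tpoly R k) (w : pt R k) (u : expo k) (M : R) : Prop :=
  exists2 c, f u = Some c & c + dotu u w = M.

Definition tmin_lb k (f : tpoly R k) (w : pt R k) (M : R) : Prop :=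
  forall u c, f u = Some c -> M <= c + dotu u w.

Definition twice_min k (f : tpoly R k) (w : pt R k) : Prop :=
  exists u v M, [/\ u != v, attains f w u M, attains f w v M & tmin_lb f w M].

Lemma VtropP k (K : tpoly R k -> Prop) (w : pt R k) :
  Vtrop K w <-> forall f, K f -> (exists u, f u <> None) -> twice_min f w.
Proof.
split=> HV f Kf nzf; have := HV f Kf nzf.
- move=> [u [v [c [d [uv [fu [fv [e lb]]]]]]]].
  by exists u, v, (c + dotu u w); split => //; [exists c | exists d].
- move=> [u [v [M [uv [c fu <-] [d fv e] lb]]]].
  by exists u, v, c, d; do 4!split => //; rewrite e.
Qed.

Definition proj_expo n (u : expo n.+1) : expo n :=
  [ffun i => u (widen_ord (leqnSn n) i)].

Lemma proj_expo_eq n (u : expo n.+1) (u' : expo n) :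
  (forall i, u (widen_ord (leqnSn n) i) = u' i) -> proj_expo u = u'.
Proof. by move=> E; apply/ffunP => i; rewrite ffunE. Qed.

Lemma widen_ord_max n (i : 'I_n) : widen_ord (leqnSn n) i = lift ord_max i.
Proof. by apply: val_inj; rewrite /= /bump leqNgt ltn_ord. Qed.

Lemma expo_eq_proj n (u v : expo n.+1) :
  proj_expo u = proj_expo v -> u ord_max = v ord_max -> u = v.
Proof.
move=> /ffunP E Emax; apply/ffunP => i.
case: (unliftP ord_max i) => [j ->|-> //].
by have := E j; rewrite !ffunE widen_ord_max.
Qed.

Definition ext_pt n (w' : pt R n) (a : R) : pt R n.+1 :=
  fun i => if unlift ord_max i is Some j then w' j else a.

Lemma ext_pt_max n (w' : pt R n) (a : R) : ext_pt w' a ord_max = a.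
Proof. by rewrite /ext_pt unlift_none. Qed.

Lemma proj_ext_pt n (w' : pt R n) (a : R) : proj (ext_pt w' a) = w'.
Proof.
by apply: functional_extensionality => i; rewrite /proj /ext_pt widen_ord_max liftK.
Qed.

Lemma dotu_widen n (u : expo n.+1) (w : pt R n.+1) :
  dotu u w = dotu (proj_expo u) (proj w) + (u ord_max)%:~R * w ord_max.
Proof.
rewrite /dotu big_ord_recr /=; congr (_ + _).
by apply: eq_bigr => i _; rewrite ffunE.
Qed.

Lemma dotu_shift k (u : expo k) (w d : pt R k) (t : R) :
  dotu u (fun i => w i + t * d i) = dotu u w + t * dotu u d.
Proof. by rewrite /dotu mulr_sumr -big_split; apply: eq_bigr => i _ /=; ring. Qed.

Lemma is_tmin_ext (A B : R -> Prop) (m : trop R) :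
  (forall x, A x <-> B x) -> is_tmin A m -> is_tmin B m.
Proof.
case: m => [c|] /= AB; last by move=> hA x /AB; apply: hA.
by move=> [/AB Bc hc]; split => // x /AB; apply: hc.
Qed.

Lemma is_tmin1 (m : trop R) : is_tmin (fun x => m = Some x) m.
Proof. by case: m => [c|] //=; split=> // x [<-]. Qed.

Lemma is_tminU (A B : R -> Prop) (x y : trop R) :
  is_tmin A x -> is_tmin B y -> is_tmin (fun z => A z \/ B z) (tmin x y).
Proof.
case: x => [a|]; case: y => [b|] //=.
- move=> [Aa ha] [Bb hb]; split.
  + by rewrite /Num.min; case: ifP => _; [left | right].
  + by move=> z [/ha|/hb]; rewrite ge_min => ->; rewrite ?orbT.
- by move=> [Aa ha] hB; split; [left | move=> z [/ha //|/hB]].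
- by move=> hA [Bb hb]; split; [right | move=> z [/hA|/hb]].
- by move=> hA hB z [/hA|/hB].
Qed.

Definition tmin_seq (T : Type) (h : T -> trop R) (s : seq T) : trop R :=
  foldr (fun u m => tmin (h u) m) None s.

Lemma tmin_seqP (T : eqType) (h : T -> trop R) (s : seq T) :
  is_tmin (fun x => exists2 u, u \in s & h u = Some x) (tmin_seq h s).
Proof.
elim: s => [|y s IH] /=; first by move=> x [].
apply: is_tmin_ext (is_tminU (is_tmin1 (h y)) IH) => x; split.
- case=> [hy|[u us hu]]; first by exists y; rewrite ?mem_head.
  by exists u; rewrite // in_cons us orbT.
- by move=> [u]; rewrite in_cons => /orP[/eqP->|us] hu; [left | right; exists u].
Qed.

Lemma restr_exists n (a : R) (f : tpoly R n.+1) :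
  finsupp f -> exists g, restr_poly a f g.
Proof.
move=> [s supp_s].
pose h u' u := if proj_expo u == u'
               then omap (fun c => c + (u ord_max)%:~R * a) (f u) else None.
exists (fun u' => tmin_seq (h u') s) => u'.
apply: is_tmin_ext (tmin_seqP (h u') s) => x; split.
- move=> [u _]; rewrite /h; case: eqP => // <-; case fu: (f u) => [c|] //= [<-].
  by exists u, c; split => //; split => // i; rewrite ffunE.
- move=> [u [c [fu [hu ->]]]]; exists u; first by apply/negPn/negP => /supp_s; rewrite fu.
  by rewrite /h (proj_expo_eq hu) eqxx fu.
Qed.

Section Restriction.
Variables (n : nat) (a : R) (f : tpoly R n.+1) (g : tpoly R n).
Hypothesis fg : restr_poly a f g.

Lemma restr_lift u' e : g u' = Some e ->
  exists u c, [/\ f u = Some c, proj_expo u = u' & e = c + (u ord_max)%:~R * a].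
Proof.
move=> gu; have := fg u'; rewrite gu => -[[u [c [fu [hu ->]]]] _].
by exists u, c; split => //; apply: proj_expo_eq.
Qed.

Lemma restr_drop u c : f u = Some c ->
  exists2 e, g (proj_expo u) = Some e & e <= c + (u ord_max)%:~R * a.
Proof.
move=> fu; have := fg (proj_expo u).
have term : exists u1 c1, f u1 = Some c1 /\
    (forall i, u1 (widen_ord (leqnSn n) i) = proj_expo u i) /\
    c + (u ord_max)%:~R * a = c1 + (u1 ord_max)%:~R * a.
  by exists u, c; split => //; split => // i; rewrite ffunE.
case: (g (proj_expo u)) => [e [_ emin]|gnone] /=; first by exists e => //; apply: emin.
by case: (gnone _ term).
Qed.

Lemma restr_nonzero : (exists u, f u <> None) <-> (exists u', g u' <> None).
Proof.
split=> -[u].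
- case fu: (f u) => [c|] // _; have [e gu _] := restr_drop fu.
  by exists (proj_expo u); rewrite gu.
- case gu: (g u) => [e|] // _; have [u1 [c [fu _ _]]] := restr_lift gu.
  by exists u1; rewrite fu.
Qed.

Variable w : pt R n.+1.
Hypothesis wa : w ord_max = a.

Lemma restr_attains u' M : attains g (proj w) u' M ->
  exists2 u, proj_expo u = u' & attains f w u M.
Proof.
move=> [e gu <-]; have [u [c [fu pu ->]]] := restr_lift gu.
by exists u => //; exists c => //; rewrite dotu_widen pu wa addrAC addrA.
Qed.

Lemma restr_tmin_lb M : tmin_lb f w M -> tmin_lb g (proj w) M.
Proof.
move=> lb u' e gu.
have [u _ [c fu <-]] := restr_attains (ex_intro2 _ _ e gu erefl).
exact: lb fu.
Qed.

Lemma restr_tmin_lb_inv M : tmin_lb g (proj w) M -> tmin_lb f w M.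
Proof.
move=> lb u c fu; have [e gu le] := restr_drop fu.
by apply: le_trans (lb _ _ gu) _; rewrite dotu_widen wa; lra.
Qed.

Lemma restr_attains_drop u M :
  tmin_lb g (proj w) M -> attains f w u M -> attains g (proj w) (proj_expo u) M.
Proof.
move=> lb [c fu eM]; subst M; have [e gu le] := restr_drop fu.
by exists e => //; have := lb _ _ gu; rewrite dotu_widen wa; lra.
Qed.

Lemma twice_min_of_restr : twice_min g (proj w) -> twice_min f w.
Proof.
move=> [u' [v' [M [uv au av lb]]]].
have [u pu au'] := restr_attains au; have [v pv av'] := restr_attains av.
exists u, v, M; split => //; last exact: restr_tmin_lb_inv.
by apply: contraNneq uv; rewrite -pu -pv => ->.
Qed.

Lemma twice_min_restr p q M : proj_expo p != proj_expo q ->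
  attains f w p M -> attains f w q M -> tmin_lb f w M -> twice_min g (proj w).
Proof.
move=> pq ap aq /restr_tmin_lb lb.
by exists (proj_expo p), (proj_expo q), M; split => //; apply: restr_attains_drop.
Qed.

End Restriction.

Lemma exists_small_step (T : eqType) (s : seq T) (F G : T -> R) :
  exists2 t, 0 < t <= 1 & forall u, u \in s -> 0 < F u -> t * `|G u| < F u.
Proof.
elim: s => [|y s [t /andP[t0 t1] Ht]]; first by exists 1; rewrite ?ltr01 ?lexx.
have [Fy|Fy] := ltrP 0 (F y); last first.
  exists t; rewrite ?t0 // => u; rewrite in_cons => /orP[/eqP->|]; last exact: Ht.
  by rewrite ltNge Fy.
have G1 : 0 < `|G y| + 1 by rewrite ltr_wpDl.
set ty := F y / (`|G y| + 1).
have ty0 : 0 < ty by rewrite divr_gt0.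
exists (Num.min t ty); first by rewrite lt_min t0 ty0 ge_min t1.
move=> u; rewrite in_cons => /orP[/eqP->|us] Fu.
- apply: le_lt_trans (_ : ty * `|G y| < F y).
    by rewrite ler_wpM2r // ge_min lexx orbT.
  by rewrite mulrAC ltr_pdivrMr // ltr_pM2l // ltrDl.
- apply: le_lt_trans (Ht u us Fu).
  by rewrite ler_wpM2r // ge_min lexx.
Qed.

Lemma twice_min_segment k (f : tpoly R k) (w d : pt R k) :
  finsupp f -> twice_min f w ->
  (forall t, 0 < t <= 1 -> twice_min f (fun i => w i + t * d i)) ->
  exists p q M,
    [/\ p != q, attains f w p M, attains f w q M, tmin_lb f w M & dotu p d = dotu q d].
Proof.
move=> [s supp_s] [u0 [_ [M [_ [c0 fu0 e0] _ lb]]]] seg.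
pose F u := if f u is Some c then c + dotu u w - M else 0.
pose G u := dotu u0 d - dotu u d.
have [t t01 Ht] := exists_small_step s F G; have /andP[t0 _] := t01.
have [p [q [N [pq [cp fp ep] [cq fq eq] lbN]]]] := seg t t01.
have NM := lbN u0 c0 fu0; rewrite dotu_shift in NM.
(* by the choice of t, a term of f lying above M at w stays above u0 at w + t d *)
have minimal u c : f u = Some c ->
    c + dotu u w + t * dotu u d <= M + t * dotu u0 d -> c + dotu u w = M.
  move=> fu hu; apply/eqP; rewrite eq_le (lb u c fu) andbT leNgt; apply/negP => Mu.
  have us : u \in s by apply/negPn/negP => /supp_s; rewrite fu.
  have := Ht u us; rewrite /F fu subr_gt0 => /(_ Mu).
  have : t * dotu u0 d - t * dotu u d <= t * `|G u|.
    by rewrite -mulrBr ler_wpM2l ?(ltW t0) // ler_norm.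
  by move: hu; lra.
move: ep eq; rewrite !dotu_shift => ep eq.
have epM : cp + dotu p w = M by apply: (minimal _ _ fp); lra.
have eqM : cq + dotu q w = M by apply: (minimal _ _ fq); lra.
exists p, q, M; split => //; [by exists cp | by exists cq |].
by apply: (mulfI (lt0r_neq0 t0)); lra.
Qed.

Lemma dotr_segment k (c w x : pt R k) (t : R) :
  dotr c (fun i => w i + t * (x i - w i)) = (1 - t) * dotr c w + t * dotr c x.
Proof. by rewrite /dotr !mulr_sumr -big_split; apply: eq_bigr => i _ /=; ring. Qed.

Lemma polyhedron_segment k (s : pt R k -> Prop) (w x : pt R k) (t : R) :
  polyhedron s -> s w -> s x -> 0 <= t <= 1 -> s (fun i => w i + t * (x i - w i)).
Proof.
move=> [m [A [b s_ineq]]] /s_ineq sw /s_ineq sx /andP[t0 t1]; apply/s_ineq => j.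
have hw : (1 - t) * dotr (A j) w <= (1 - t) * b j by rewrite ler_wpM2l ?subr_ge0.
have hx : t * dotr (A j) x <= t * b j by rewrite ler_wpM2l.
by rewrite dotr_segment; lra.
Qed.

Lemma dspan_const_coord k (s : pt R k -> Prop) (i : 'I_k) (a : R) (v : pt R k) :
  (forall y, s y -> y i = a) -> dspan s v -> v i = 0.
Proof.
move=> sa [l [sl ->]]; elim: l sl => [|[[r y] z] l IH] sl; first by rewrite big_nil.
rewrite big_cons IH => [|t lt]; last exact: sl _ (or_intror lt).
have [/= sy sz] := sl _ (or_introl erefl).
by rewrite /= (sa _ sy) (sa _ sz) subrr mulr0 addr0.
Qed.

Section Ideal.
Variables (n : nat) (I : tpoly R n.+1 -> Prop) (a : R).
Hypothesis I_finsupp : forall f, I f -> finsupp f.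

Lemma Vtrop_ext_of_restr (w' : pt R n) :
  Vtrop (restr_ideal I a) w' -> Vtrop I (ext_pt w' a).
Proof.
move=> /VtropP HV; apply/VtropP => f If nzf.
have [g fg] := restr_exists a (I_finsupp If).
apply: (twice_min_of_restr fg (ext_pt_max w' a)); rewrite proj_ext_pt.
exact: HV g (ex_intro _ f (conj If fg)) ((restr_nonzero fg).1 nzf).
Qed.

Lemma Vtrop_restr_of_segment (w x : pt R n.+1) :
  w ord_max = a -> x ord_max != a -> Vtrop I w ->
  (forall t, 0 < t <= 1 -> Vtrop I (fun i => w i + t * (x i - w i))) ->
  Vtrop (restr_ideal I a) (proj w).
Proof.
move=> wa xa /VtropP Vw Vseg; apply/VtropP => g [f [If fg]] /(restr_nonzero fg) nzf.
have seg t : 0 < t <= 1 -> twice_min f (fun i => w i + t * (x i - w i)).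
  by move=> t01; apply: (VtropP _ _).1 (Vseg t t01) f If nzf.
have [p [q [M [pq ap aq lb dpq]]]] := twice_min_segment (I_finsupp If) (Vw f If nzf) seg.
case: (eqVneq (proj_expo p) (proj_expo q)) => [Epq|Npq]; last first.
  exact: (twice_min_restr fg wa Npq ap aq lb).
have dn : x ord_max - w ord_max != 0 by rewrite subr_eq0 wa.
move: dpq; rewrite !dotu_widen Epq => /addrI /(mulIf dn) /intr_inj pqn.
by move: pq; rewrite (expo_eq_proj Epq pqn) eqxx.
Qed.

Lemma Vtrop_restr_of_cell (S : seq (pt R n.+1 -> Prop)) (s : pt R n.+1 -> Prop)
    (w : pt R n.+1) :
  polyhedral_complex S -> (forall x, cx_support S x <-> Vtrop I x) ->
  List.In s S -> s w -> w ord_max = a ->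
  ~ (forall v, dspan s v -> v ord_max = 0) ->
  Vtrop (restr_ideal I a) (proj w).
Proof.
move=> [S_poly _] SI sS sw wa s_nonflat.
have VIs y : s y -> Vtrop I y by move=> sy; apply/SI; exists s.
have [x sx xa] : exists2 x, s x & x ord_max != a.
  apply: NNPP => all_a; apply: s_nonflat => v; apply: (dspan_const_coord (a := a)) => y sy.
  by case: (eqVneq (y ord_max) a) => // ya; case: all_a; exists y.
apply: (Vtrop_restr_of_segment wa xa (VIs w sw)) => t /andP[t0 t1].
apply/VIs/(polyhedron_segment (S_poly s sS) sw sx).
by rewrite (ltW t0).
Qed.

End Ideal.

Lemma transverse_hyperplane_cell n (X : pt R n.+1 -> Prop) (a : R) (w : pt R n.+1) :
  transverse X (fun x => x ord_max = a) w ->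
  exists S s, [/\ polyhedral_complex S, forall x, cx_support S x <-> X x,
                  List.In s S, s w & ~ (forall v, dspan s v -> v ord_max = 0)].
Proof.
move=> [S [S' [s [s' [cS [SX [_ [S'a [sS [s'S' [[sw _] [_ span]]]]]]]]]]]].
exists S, s; split => // s_flat.
have [v [v' [dv [dv' e]]]] := span (fun i => (i == ord_max)%:R).
have v'0 : v' ord_max = 0.
  by apply: (dspan_const_coord _ dv') => y s'y; apply/S'a; exists s'.
by have := e ord_max; rewrite eqxx (s_flat v dv) v'0 addr0 => /eqP; rewrite oner_eq0.
Qed.

End TropicalRestriction.

Unset Implicit Arguments.

Theorem proposition3p9 (R : realType) (n : nat) (I : tpoly R n.+1 -> Prop) (a : R) :
  tropical_ideal I ->
  (forall w' : pt R n, Vtrop (restr_ideal I a) w' ->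
     exists w : pt R n.+1, Vtrop I w /\ w ord_max = a /\ forall i, proj w i = w' i) /\
  (forall (S : seq (pt R n.+1 -> Prop)) (s : pt R n.+1 -> Prop) (w : pt R n.+1),
     polyhedral_complex S -> (forall x, cx_support S x <-> Vtrop I x) ->
     List.In s S -> s w -> w ord_max = a ->
     ~ (forall v, dspan s v -> v ord_max = 0) ->
     Vtrop (restr_ideal I a) (proj w)) /\
  (forall w : pt R n.+1, w ord_max = a ->
     transverse (Vtrop I) (fun x : pt R n.+1 => x ord_max = a) w ->
     Vtrop (restr_ideal I a) (proj w)).
Proof.
move=> [I_finsupp _]; split; [|split].
- move=> w' Vw'; exists (ext_pt w' a).
  by rewrite ext_pt_max proj_ext_pt; split => //; apply: Vtrop_ext_of_restr.
- by move=> S s w; apply: Vtrop_restr_of_cell.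
- move=> w wa /transverse_hyperplane_cell [S [s [cS SV sS sw s_nonflat]]].
  exact: Vtrop_restr_of_cell cS SV sS sw wa s_nonflat.
Qed.
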